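(* Let $\Xi=\{(x_1,x_2): x_1,x_2\ge 0,\ x_1+x_2\le 1\}$, $x_0=1-x_1-x_2$, and for $\beta>0$ let $F_\beta(\mathbf{x})=-\frac12|\sum_{k=0}^2x_k\mathbf{v}_k|^2+\frac1\beta\sum_{k=0}^2x_k\log(3x_k)$ with $\mathbf{v}_k=(\cos(2\pi k/3),\sin(2\pi k/3))$. Let $\beta_1=2$, $\mathbf{p}=(1/3,1/3)$, and let $\beta_3$, $\mathbf{m}_i^\beta$, $\boldsymbol{\sigma}_i^\beta$ be as in the context. Then the critical points of $F_\beta$ in the interior of $\Xi$ are as follows: (1) For $\beta\in(0,\beta_3)$, $\mathbf{p}$ is the unique critical point, and $\mathbf{p}$ is the global minimum of $F_\beta$. (2) For $\beta=\beta_3$, the critical points are exactly $\mathbf{m}_0^\beta,\mathbf{m}_1^\beta,\mathbf{m}_2^\beta$ and $\mathbf{p}$. The first three are degenerate critical points which are not local minima, while $\mathbf{p}$ is the global minimum. (3) For $\beta\in(\beta_3,\beta_1)$, the critical points are exactly the four local minima $\mathbf{m}_0^\beta,\mathbf{m}_1^\beta,\mathbf{m}_2^\beta,\mathbf{p}$ and the three saddle points $\boldsymbol{\sigma}_0^\beta,\boldsymbol{\sigma}_1^\beta,\boldsymbol{\sigma}_2^\beta$. (4) For $\beta=\beta_1$, the critical points are exactly $\mathbf{m}_0^\beta,\mathbf{m}_1^\beta,\mathbf{m}_2^\beta$ and $\mathbf{p}$. The first three are local minima, and $\mathbf{p}$ is a degenerate critical point which is not a local minimum. (5) For $\beta\in(\beta_1,\infty)$,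 the critical points are exactly the three global minima $\mathbf{m}_0^\beta,\mathbf{m}_1^\beta,\mathbf{m}_2^\beta$, the three saddle points $\boldsymbol{\sigma}_0^\beta,\boldsymbol{\sigma}_1^\beta,\boldsymbol{\sigma}_2^\beta$, and the local maximum $\mathbf{p}$.
   Context: Convention $0\log0=0$. Define $f_0:(0,1/2)\to\mathbb{R}$ by $f_0(t)=\frac{2}{3(1-3t)}\log\frac{1-2t}{t}$ for $t\ne 1/3$ and $f_0(1/3)=2$. Let $m_0$ be the point at which $f_0$ attains its minimum (numerically $m_0\approx 0.2076$) and $\beta_3=f_0(m_0)$ (numerically $\approx1.8304$). For $\beta>\beta_3$ the equation $f_0(t)=\beta$ has exactly two solutions $p_\beta<m_0<q_\beta$ in $(0,1/2)$; for $\beta=\beta_3$ set $p_\beta=q_\beta=m_0$. For $\beta\ge\beta_3$ define $\mathbf{m}_0^\beta=(p_\beta,p_\beta)$, $\mathbf{m}_1^\beta=(1-2p_\beta,p_\beta)$, $\mathbf{m}_2^\beta=(p_\beta,1-2p_\beta)$, $\boldsymbol{\sigma}_0^\beta=(q_\beta,q_\beta)$, $\boldsymbol{\sigma}_1^\beta=(1-2q_\beta,q_\beta)$, $\boldsymbol{\sigma}_2^\beta=(q_\beta,1-2q_\beta)$. A critical point is called degenerate if the determinant of the Hessian of $F_\beta$ there vanishes; a saddle point is a critical point at which the Hessian has one positive and one negative eigenvalue. *)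

From Stdlib Require Import Reals Lra.
From Coquelicot Require Import Coquelicot.
Open Scope R_scope.

Definition plogp (t : R) : R :=
  if Req_EM_T t 0 then 0 else t * ln (3 * t).

Definition vx (k : R) : R := cos (2 * PI * k / 3).
Definition vy (k : R) : R := sin (2 * PI * k / 3).

(* the point (x1,x2) of Xi, with x0 = 1 - x1 - x2 *)
Definition in_Xi (x1 x2 : R) : Prop := 0 <= x1 /\ 0 <= x2 /\ x1 + x2 <= 1.
Definition in_int_Xi (x1 x2 : R) : Prop := 0 < x1 /\ 0 < x2 /\ x1 + x2 < 1.

Definition F (beta x1 x2 : R) : R :=
  let x0 := 1 - x1 - x2 in
  let s1 := x0 * vx 0 + x1 * vx 1 + x2 * vx 2 in
  let s2 := x0 * vy 0 + x1 * vy 1 + x2 * vy 2 in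
  - / 2 * (s1 ^ 2 + s2 ^ 2) + / beta * (plogp x0 + plogp x1 + plogp x2).

Definition d1F (beta a b : R) : R := Derive (fun t => F beta t b) a.
Definition d2F (beta a b : R) : R := Derive (fun t => F beta a t) b.

Definition H11 (beta a b : R) : R := Derive (fun t => d1F beta t b) a.
Definition H12 (beta a b : R) : R := Derive (fun t => d1F beta a t) b.
Definition H21 (beta a b : R) : R := Derive (fun t => d2F beta t b) a.
Definition H22 (beta a b : R) : R := Derive (fun t => d2F beta a t) b.

Definition hess_det (beta a b : R) : R :=
  H11 beta a b * H22 beta a b - H12 beta a b * H21 beta a b.

Definition hess_eigenvalue (beta a b l : R) : Prop :=
  (H11 beta a b - l) * (H22 beta a b - l) - H12 beta a b * H21 beta a b = 0.

Definition critical (beta a b : R) : Prop :=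
  d1F beta a b = 0 /\ d2F beta a b = 0.

Definition degenerate_critical (beta a b : R) : Prop :=
  critical beta a b /\ hess_det beta a b = 0.

Definition saddle (beta a b : R) : Prop :=
  critical beta a b /\
  exists l1 l2, 0 < l1 /\ l2 < 0 /\
    hess_eigenvalue beta a b l1 /\ hess_eigenvalue beta a b l2.

Definition global_min (beta a b : R) : Prop :=
  forall y1 y2, in_Xi y1 y2 -> F beta a b <= F beta y1 y2.

Definition local_min (beta a b : R) : Prop :=
  exists eps, 0 < eps /\ forall y1 y2, in_Xi y1 y2 ->
    (y1 - a) ^ 2 + (y2 - b) ^ 2 < eps ^ 2 -> F beta a b <= F beta y1 y2.

Definition local_max (beta a b : R) : Prop :=
  exists eps, 0 < eps /\ forall y1 y2, in_Xi y1 y2 ->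
    (y1 - a) ^ 2 + (y2 - b) ^ 2 < eps ^ 2 -> F beta y1 y2 <= F beta a b.

Definition f0 (t : R) : R :=
  if Req_EM_T t (1/3) then 2 else 2 / (3 * (1 - 3 * t)) * ln ((1 - 2 * t) / t).

Definition beta1 : R := 2.

(* With x0 = 1 - x1 - x2, F = 1/4 + phi(x0) + phi(x1) + phi(x2) where
   phi(x) = -3x^2/4 + x log(3x)/beta, so (x1,x2) is critical iff phi' takes the same value
   at x0, x1, x2.  Since phi' increases up to 2/(3 beta) and decreases afterwards, two
   coordinates agree: the critical points are the points (t,t), (1-2t,t), (t,1-2t) for the
   zeros t of K(t) = log((1-2t)/t) - 3 beta (1-3t)/2, i.e. t = 1/3 or f0(t) = beta.  K' has
   the sign of the concave quadratic 9 beta t (1-2t) - 2, so by Rolle K has at most three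
   zeros, and the way they interlace with the roots of K' gives the sign of K, hence the
   monotonicity of F on the symmetric line (where F' = -2K/beta) and the sign of the Hessian
   determinant.  Minima on the line are minima in the plane because
   2 phi((u+v)/2) <= phi(u) + phi(v) when (u+v)/2 <= 2/(3 beta), and spreading mass apart
   above 2/(3 beta) lowers F, so every point of the simplex can be pushed onto the line
   without increasing F; the maximum at (1/3,1/3) comes from concavity of phi above
   2/(3 beta). *)

From Stdlib Require Import Reals Lra Psatz.
From Coquelicot Require Import Coquelicot.
Open Scope R_scope.

(** * The energy as a sum over coordinates *)

Definition phi (b x : R) : R := - (3/4) * x ^ 2 + / b * plogp x.
Definition dphi (b x : R) : R := - (3/2) * x + / b * (ln (3 * x) + 1).
Definition d2phi (b x : R) : R := - (3/2) + / (b * x).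

Lemma plogp_pos x : 0 < x -> plogp x = x * ln (3 * x).
Proof. intros Hx. unfold plogp. destruct (Req_EM_T x 0); [lra | reflexivity]. Qed.

Lemma phi_0 b : phi b 0 = 0.
Proof. unfold phi, plogp. destruct (Req_EM_T 0 0); [ring | lra]. Qed.

Lemma F_sum_phi b x1 x2 :
  F b x1 x2 = 1/4 + phi b (1 - x1 - x2) + phi b x1 + phi b x2.
Proof.
  unfold F, vx, vy, phi.
  replace (2 * PI * 0 / 3) with 0 by field.
  replace (2 * PI * 1 / 3) with (PI - PI / 3) by field.
  replace (2 * PI * 2 / 3) with (PI / 3 + PI) by field.
  rewrite cos_0, sin_0, Rtrigo_facts.cos_pi_minus, sin_PI_x, neg_cos, neg_sin,
    cos_PI3, sin_PI3.
  assert (Hs : sqrt 3 * sqrt 3 = 3) by (apply sqrt_sqrt; lra).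
  set (s := sqrt 3) in *. set (B := / b).
  replace (((1 - x1 - x2) * 0 + x1 * (s / 2) + x2 * - (s / 2)) ^ 2)
    with (s * s / 4 * (x1 - x2) ^ 2) by field.
  rewrite Hs. field.
Qed.

Lemma mean_value (f df : R -> R) a b : a < b ->
  (forall x, a <= x <= b -> is_derive f x (df x)) ->
  exists c, a < c < b /\ f b - f a = df c * (b - a).
Proof.
  intros Hab Hd.
  destruct (MVT_cor2 f df a b Hab) as [c [E Hc]].
  - intros x Hx. apply is_derive_Reals, Hd, Hx.
  - exists c. split; assumption.
Qed.

Lemma is_derive_reflect (f : R -> R) (m x d : R) :
  is_derive f (m - x) d -> is_derive (fun t => f (m - t)) x (- d).
Proof.
  intros H. replace (- d) with (-1 * d) by ring.
  apply (is_derive_comp f (fun t => m - t)); [exact H |].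
  auto_derive; [exact I | ring].
Qed.

Lemma is_derive_phi b x : 0 < x -> is_derive (phi b) x (dphi b x).
Proof.
  intros Hx.
  apply is_derive_ext_loc with (fun t => - (3/4) * t ^ 2 + / b * (t * ln (3 * t))).
  - apply (locally_interval _ x 0 p_infty); [simpl; lra | exact I |].
    intros t Ht _. simpl in Ht. unfold phi. rewrite plogp_pos by lra. reflexivity.
  - auto_derive; [lra |]. unfold dphi. set (B := / b). field. lra.
Qed.

Lemma is_derive_dphi b x : b <> 0 -> 0 < x -> is_derive (dphi b) x (d2phi b x).
Proof. intros Hb Hx. unfold dphi, d2phi. auto_derive; [lra |]. field. lra. Qed.

Lemma is_derive_phi_pair b m x : 0 < x -> 0 < m - x ->
  is_derive (fun t => phi b t + phi b (m - t)) x (dphi b x - dphi b (m - x)).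
Proof.
  intros Hx Hmx. apply (is_derive_plus (phi b)); [apply is_derive_phi, Hx |].
  apply is_derive_reflect, is_derive_phi, Hmx.
Qed.

Lemma is_derive_dphi_pair b m x : b <> 0 -> 0 < x -> 0 < m - x ->
  is_derive (fun t => dphi b t - dphi b (m - t)) x (d2phi b x + d2phi b (m - x)).
Proof.
  intros Hb Hx Hmx. replace (d2phi b x + d2phi b (m - x)) with
    (d2phi b x - - d2phi b (m - x)) by ring.
  apply (is_derive_minus (dphi b)); [apply is_derive_dphi; assumption |].
  apply is_derive_reflect, is_derive_dphi; assumption.
Qed.

Lemma is_derive_F1 (b a c : R) : 0 < a -> 0 < 1 - a - c ->
  is_derive (fun t => F b t c) a (dphi b a - dphi b (1 - a - c)).
Proof.
  intros Ha Hx0.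
  apply is_derive_ext with (fun t => phi b t + phi b (1 - c - t) + (1/4 + phi b c)).
  { intros t. rewrite F_sum_phi. replace (1 - t - c) with (1 - c - t) by ring. lra. }
  replace (1 - a - c) with (1 - c - a) by ring. rewrite <- Rplus_0_r.
  apply (is_derive_plus (fun t => phi b t + phi b (1 - c - t)) (fun _ => 1/4 + phi b c));
    [apply is_derive_phi_pair; lra | apply (is_derive_const (1/4 + phi b c) a)].
Qed.

Lemma is_derive_F2 (b a c : R) : 0 < c -> 0 < 1 - a - c ->
  is_derive (fun t => F b a t) c (dphi b c - dphi b (1 - a - c)).
Proof.
  intros Hc Hx0.
  apply is_derive_ext with (fun t => phi b t + phi b (1 - a - t) + (1/4 + phi b a)).
  { intros t. rewrite F_sum_phi. lra. }
  rewrite <- Rplus_0_r.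
  apply (is_derive_plus (fun t => phi b t + phi b (1 - a - t)) (fun _ => 1/4 + phi b a));
    [apply is_derive_phi_pair; lra | apply (is_derive_const (1/4 + phi b a) c)].
Qed.

Lemma d1F_eq b a c : 0 < a -> 0 < 1 - a - c -> d1F b a c = dphi b a - dphi b (1 - a - c).
Proof. intros Ha Hx0. apply is_derive_unique, is_derive_F1; assumption. Qed.

Lemma d2F_eq b a c : 0 < c -> 0 < 1 - a - c -> d2F b a c = dphi b c - dphi b (1 - a - c).
Proof. intros Hc Hx0. apply is_derive_unique, is_derive_F2; assumption. Qed.

Lemma Derive_dphi_pair (b m x : R) (g : R -> R) : b <> 0 -> 0 < x -> 0 < m - x ->
  locally x (fun t => g t = dphi b t - dphi b (m - t)) ->
  Derive g x = d2phi b x + d2phi b (m - x).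
Proof.
  intros Hb Hx Hmx Hg. apply is_derive_unique.
  apply (is_derive_ext_loc (fun t => dphi b t - dphi b (m - t))).
  - apply (filter_imp _ _ (fun t E => eq_sym E) Hg).
  - apply is_derive_dphi_pair; assumption.
Qed.

Lemma Derive_dphi_reflect (b k m x : R) (g : R -> R) : b <> 0 -> 0 < m - x ->
  locally x (fun t => g t = k - dphi b (m - t)) -> Derive g x = d2phi b (m - x).
Proof.
  intros Hb Hmx Hg. apply is_derive_unique.
  apply (is_derive_ext_loc (fun t => k - dphi b (m - t))).
  - apply (filter_imp _ _ (fun t E => eq_sym E) Hg).
  - replace (d2phi b (m - x)) with (0 - - d2phi b (m - x)) by ring.
    apply (is_derive_minus (fun _ => k)); [apply (is_derive_const k x) |].
    apply is_derive_reflect, is_derive_dphi; assumption.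
Qed.

Lemma hess_det_eq b a c : b <> 0 -> in_int_Xi a c ->
  hess_det b a c = d2phi b a * d2phi b c
    + (d2phi b a + d2phi b c) * d2phi b (1 - a - c).
Proof.
  intros Hb (Ha & Hc & Hac).
  assert (E11 : H11 b a c = d2phi b a + d2phi b (1 - a - c)).
  { replace (1 - a - c) with (1 - c - a) by ring.
    apply Derive_dphi_pair; [assumption | assumption | lra |].
    apply (locally_interval _ a 0 (1 - c)); [simpl; lra .. |].
    intros t Ht0 Ht1; simpl in Ht0, Ht1. rewrite d1F_eq by lra. do 2 f_equal. ring. }
  assert (E12 : H12 b a c = d2phi b (1 - a - c)).
  { apply (Derive_dphi_reflect b (dphi b a)); [assumption | lra |].
    apply (locally_interval _ c 0 (1 - a)); [simpl; lra .. |].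
    intros t Ht0 Ht1; simpl in Ht0, Ht1. apply d1F_eq; lra. }
  assert (E21 : H21 b a c = d2phi b (1 - a - c)).
  { replace (1 - a - c) with (1 - c - a) by ring.
    apply (Derive_dphi_reflect b (dphi b c)); [assumption | lra |].
    apply (locally_interval _ a 0 (1 - c)); [simpl; lra .. |].
    intros t Ht0 Ht1; simpl in Ht0, Ht1. rewrite d2F_eq by lra. do 2 f_equal. ring. }
  assert (E22 : H22 b a c = d2phi b c + d2phi b (1 - a - c)).
  { apply Derive_dphi_pair; [assumption | assumption | lra |].
    apply (locally_interval _ c 0 (1 - a)); [simpl; lra .. |].
    intros t Ht0 Ht1; simpl in Ht0, Ht1. apply d2F_eq; lra. }
  unfold hess_det. rewrite E11, E12, E21, E22. ring.
Qed.

Lemma d2phi_pos b x : 0 < b -> 0 < x -> b * x < 2/3 -> 0 < d2phi b x.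
Proof.
  intros Hb Hx Hbx. unfold d2phi.
  assert (3/2 < / (b * x)); [| lra].
  replace (3/2) with (/ (2/3)) by field. apply Rinv_lt_contravar; nra.
Qed.

Lemma d2phi_neg b x : 0 < b -> 2/3 < b * x -> d2phi b x < 0.
Proof.
  intros Hb Hbx. unfold d2phi.
  assert (/ (b * x) < 3/2); [| lra].
  replace (3/2) with (/ (2/3)) by field. apply Rinv_lt_contravar; lra.
Qed.

Lemma dphi_increasing b x y : 0 < b -> 0 < x < y -> b * y <= 2/3 -> dphi b x < dphi b y.
Proof.
  intros Hb Hxy Hy.
  destruct (mean_value (dphi b) (d2phi b) x y) as (c & Hc & E); [lra | |].
  - intros t Ht. apply is_derive_dphi; lra.
  - assert (0 < d2phi b c) by (apply d2phi_pos; nra). nra.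
Qed.

Lemma dphi_decreasing b x y : 0 < b -> 2/3 <= b * x -> x < y -> dphi b y < dphi b x.
Proof.
  intros Hb Hx Hxy.
  destruct (mean_value (dphi b) (d2phi b) x y) as (c & Hc & E); [lra | |].
  - intros t Ht. apply is_derive_dphi; [lra | nra].
  - assert (d2phi b c < 0) by (apply d2phi_neg; nra). nra.
Qed.

Lemma dphi_eq_straddle b x y : 0 < b -> 0 < x < y -> dphi b x = dphi b y ->
  b * x < 2/3 < b * y.
Proof.
  intros Hb Hxy E. split.
  - destruct (Rlt_or_le (b * x) (2/3)) as [H | H]; [exact H |].
    pose proof (dphi_decreasing b x y Hb H (proj2 Hxy)). lra.
  - destruct (Rlt_or_le (2/3) (b * y)) as [H | H]; [exact H |].
    pose proof (dphi_increasing b x y Hb Hxy H). lra.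
Qed.

Lemma dphi_three_values b x y z : 0 < b -> 0 < x -> 0 < y -> 0 < z ->
  dphi b x = dphi b y -> dphi b y = dphi b z -> x = y \/ y = z \/ x = z.
Proof.
  intros Hb Hx Hy Hz Exy Eyz.
  assert (Exz : dphi b x = dphi b z) by congruence.
  assert (S : forall u v, 0 < u -> 0 < v -> dphi b u = dphi b v ->
            u = v \/ b * u < 2/3 < b * v \/ b * v < 2/3 < b * u).
  { intros u v Hu Hv E. destruct (Rtotal_order u v) as [H | [H | H]].
    - right; left. apply dphi_eq_straddle; [assumption | lra | assumption].
    - left; assumption.
    - right; right. apply dphi_eq_straddle; [assumption | lra | symmetry; assumption]. }
  destruct (S x y Hx Hy Exy) as [? | [? | ?]]; [tauto | |];
  destruct (S y z Hy Hz Eyz) as [? | [? | ?]]; try tauto;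
  destruct (S x z Hx Hz Exz) as [? | [? | ?]]; try tauto; lra.
Qed.

(** * Critical points and the function K *)

Definition orbit (t a c : R) : Prop :=
  (a, c) = (t, t) \/ (a, c) = (1 - 2 * t, t) \/ (a, c) = (t, 1 - 2 * t).

Lemma orbit_diag t : orbit t t t.
Proof. left. reflexivity. Qed.

Lemma orbit_fst t : orbit t (1 - 2 * t) t.
Proof. right; left. reflexivity. Qed.

Lemma orbit_snd t : orbit t t (1 - 2 * t).
Proof. right; right. reflexivity. Qed.

Lemma orbit_in_int_Xi t a c : 0 < t < 1/2 -> orbit t a c -> in_int_Xi a c.
Proof. intros Ht [E | [E | E]]; injection E; intros -> ->; unfold in_int_Xi; lra. Qed.

Lemma orbit_all (P : R -> R -> Prop) t : (forall a c, orbit t a c -> P a c) ->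
  P t t /\ P (1 - 2 * t) t /\ P t (1 - 2 * t).
Proof.
  intros H. split; [| split]; apply H; [apply orbit_diag | apply orbit_fst | apply orbit_snd].
Qed.

Lemma orbit_third a c : orbit (1/3) a c -> (a, c) = (1/3, 1/3).
Proof. intros [E | [E | E]]; rewrite E; f_equal; field. Qed.

Definition K (b t : R) : R := ln (1 - 2 * t) - ln t - 3/2 * b * (1 - 3 * t).

Lemma dphi_sym_diff b t : 0 < b -> 0 < t < 1/2 ->
  dphi b t - dphi b (1 - 2 * t) = - K b t / b.
Proof. intros Hb Ht. unfold dphi, K. rewrite !ln_mult by lra. field. lra. Qed.

Lemma K_zero_iff_dphi_eq b t : 0 < b -> 0 < t < 1/2 ->
  K b t = 0 <-> dphi b t = dphi b (1 - 2 * t).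
Proof.
  intros Hb Ht.
  assert (E : K b t = - b * (dphi b t - dphi b (1 - 2 * t)))
    by (rewrite dphi_sym_diff by assumption; field; lra).
  rewrite E. split; intros H; [| rewrite H; ring].
  destruct (Rmult_integral _ _ H); lra.
Qed.

Lemma critical_iff_orbit b a c : 0 < b -> in_int_Xi a c ->
  critical b a c <-> exists t, 0 < t < 1/2 /\ K b t = 0 /\ orbit t a c.
Proof.
  intros Hb (Ha & Hc & Hac). unfold critical. rewrite d1F_eq, d2F_eq by lra.
  split.
  - intros (E1 & E2).
    destruct (dphi_three_values b a c (1 - a - c)) as [E | [E | E]]; try lra.
    + exists a. rewrite K_zero_iff_dphi_eq by lra.
      replace (1 - 2 * a) with (1 - a - c) by lra.
      split; [lra | split; [lra | left; rewrite <- E; reflexivity]].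
    + exists c. rewrite K_zero_iff_dphi_eq by lra. replace (1 - 2 * c) with a by lra.
      split; [lra | split; [lra | right; left; f_equal; lra]].
    + exists a. rewrite K_zero_iff_dphi_eq by lra. replace (1 - 2 * a) with c by lra.
      split; [lra | split; [lra | right; right; f_equal; lra]].
  - intros (t & Ht & HK & Horb). rewrite K_zero_iff_dphi_eq in HK by assumption.
    destruct Horb as [E | [E | E]]; injection E; intros -> ->.
    + replace (1 - t - t) with (1 - 2 * t) by ring. lra.
    + replace (1 - (1 - 2 * t) - t) with t by ring. lra.
    + replace (1 - t - (1 - 2 * t)) with t by ring. lra.
Qed.

Lemma critical_of_orbit b t a c : 0 < b -> 0 < t < 1/2 -> K b t = 0 -> orbit t a c ->
  critical b a c.
Proof.
  intros Hb Ht HK Horb. apply (critical_iff_orbit b a c Hb (orbit_in_int_Xi t a c Ht Horb)).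
  exists t. tauto.
Qed.

Definition Knum (b t : R) : R := 9 * b * t * (1 - 2 * t) - 2.

Lemma K_third b : K b (1/3) = 0.
Proof. unfold K. replace (1 - 2 * (1/3)) with (1/3) by field. field. Qed.

Lemma Knum_third b : Knum b (1/3) = b - 2.
Proof. unfold Knum. field. Qed.

Lemma is_derive_K b t : 0 < t < 1/2 -> is_derive (K b) t (Knum b t / (2 * t * (1 - 2 * t))).
Proof. intros Ht. unfold K, Knum. auto_derive; [lra |]. field. lra. Qed.

Lemma K_mean_value b x y : 0 < x < y -> y < 1/2 ->
  exists c, x < c < y /\ K b y - K b x = Knum b c / (2 * c * (1 - 2 * c)) * (y - x).
Proof.
  intros Hxy Hy. apply mean_value; [lra |].
  intros t Ht. apply is_derive_K. lra.
Qed.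

Lemma K_increasing b x y : 0 < x < y -> y < 1/2 ->
  (forall c, x < c < y -> 0 < Knum b c) -> K b x < K b y.
Proof.
  intros Hxy Hy Hpos. destruct (K_mean_value b x y Hxy Hy) as (c & Hc & E).
  assert (0 < Knum b c / (2 * c * (1 - 2 * c))) by (apply Rdiv_lt_0_compat; [apply Hpos, Hc | nra]).
  nra.
Qed.

Lemma K_decreasing b x y : 0 < x < y -> y < 1/2 ->
  (forall c, x < c < y -> Knum b c < 0) -> K b y < K b x.
Proof.
  intros Hxy Hy Hneg. destruct (K_mean_value b x y Hxy Hy) as (c & Hc & E).
  assert (0 < - Knum b c / (2 * c * (1 - 2 * c))).
  { apply Rdiv_lt_0_compat; [pose proof (Hneg c Hc); lra | nra]. }
  assert (Knum b c / (2 * c * (1 - 2 * c)) < 0) by (unfold Rdiv in *; lra).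
  nra.
Qed.

Lemma K_rolle b x y : 0 < x < y -> y < 1/2 -> K b x = K b y ->
  exists c, x < c < y /\ Knum b c = 0.
Proof.
  intros Hxy Hy E. destruct (K_mean_value b x y Hxy Hy) as (c & Hc & D).
  exists c. split; [exact Hc |].
  assert (Hq : Knum b c / (2 * c * (1 - 2 * c)) = 0).
  { apply (Rmult_eq_reg_r (y - x)); lra. }
  unfold Rdiv in Hq. destruct (Rmult_integral _ _ Hq) as [H | H]; [exact H |].
  exfalso. revert H. apply Rinv_neq_0_compat. nra.
Qed.

Lemma Knum_zero_of_local_min b z lo hi : lo < z < hi -> 0 < lo -> hi <= 1/2 ->
  (forall t, lo < t < hi -> K b z <= K b t) -> Knum b z = 0.
Proof.
  intros Hz Hlo Hhi Hmin.
  assert (pr : derivable_pt (K b) z).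
  { apply ex_derive_Reals_0. eexists. apply is_derive_K. lra. }
  pose proof (deriv_minimum (K b) lo hi z pr ltac:(lra) ltac:(lra)
                (fun t H1 H2 => Hmin t (conj H1 H2))) as D.
  rewrite Derive_Reals, (is_derive_unique _ _ _ (is_derive_K b z ltac:(lra))) in D.
  unfold Rdiv in D. destruct (Rmult_integral _ _ D) as [E | E]; [exact E |].
  exfalso. revert E. apply Rinv_neq_0_compat. nra.
Qed.

(* [Knum b] is a quadratic symmetric about [1/4]. *)
Lemma Knum_roots_sum b c1 c2 : Knum b c1 = 0 -> Knum b c2 = 0 -> c1 <> c2 -> c1 + c2 = 1/2.
Proof.
  unfold Knum. intros E1 E2 N.
  assert (Hb : b <> 0) by (intros ->; lra).
  assert (E : 9 * b * (c1 - c2) * (1 - 2 * (c1 + c2)) = 0) by lra.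
  destruct (Rmult_integral _ _ E) as [H | H]; [| lra].
  exfalso. destruct (Rmult_integral _ _ H) as [H' | H']; [| lra].
  destruct (Rmult_integral _ _ H') as [H'' | H'']; lra.
Qed.

Lemma Knum_root_bounds b c : 0 < b -> Knum b c = 0 -> 0 < c < 1/2.
Proof.
  unfold Knum. intros Hb E.
  assert (P : 0 < c * (1 - 2 * c)).
  { apply (Rmult_lt_reg_l (9 * b)); [lra |]. nra. }
  destruct (Rlt_or_le 0 c); [split; nra | nra].
Qed.

Section Knum_roots.

Variables b c1 c2 : R.
Hypotheses (Hb : 0 < b) (Hc1 : Knum b c1 = 0) (Hc2 : Knum b c2 = 0) (Hc12 : c1 < c2).

Let c1_bounds : 0 < c1 < 1/2 := Knum_root_bounds b c1 Hb Hc1.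
Let c2_bounds : 0 < c2 < 1/2 := Knum_root_bounds b c2 Hb Hc2.

Lemma Knum_factor t : Knum b t = 18 * b * (t - c1) * (c2 - t).
Proof.
  assert (S : c1 + c2 = 1/2) by (apply (Knum_roots_sum b c1 c2 Hc1 Hc2); lra).
  replace c2 with (1/2 - c1) by lra.
  transitivity (Knum b t - Knum b c1); [rewrite Hc1; ring | unfold Knum; field].
Qed.

Lemma K_decreasing_left x y : 0 < x < y -> y <= c1 -> K b y < K b x.
Proof.
  intros Hxy Hy. pose proof c1_bounds. apply K_decreasing; [lra | lra |].
  intros c Hc. rewrite Knum_factor. assert (0 < b * (c1 - c) * (c2 - c)); [| nra].
  apply Rmult_lt_0_compat; [apply Rmult_lt_0_compat |]; lra.
Qed.

Lemma K_increasing_mid x y : c1 <= x < y -> y <= c2 -> K b x < K b y.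
Proof.
  intros Hxy Hy. pose proof c1_bounds. pose proof c2_bounds.
  apply K_increasing; [lra | lra |].
  intros c Hc'. rewrite Knum_factor. assert (0 < b * (c - c1) * (c2 - c)); [| nra].
  apply Rmult_lt_0_compat; [apply Rmult_lt_0_compat |]; lra.
Qed.

Lemma K_decreasing_right x y : c2 <= x < y -> y < 1/2 -> K b y < K b x.
Proof.
  intros Hxy Hy. apply K_decreasing; [lra | lra |].
  intros c Hc. rewrite Knum_factor. assert (0 < b * (c - c1) * (c - c2)); [| nra].
  apply Rmult_lt_0_compat; [apply Rmult_lt_0_compat |]; lra.
Qed.

End Knum_roots.

Lemma K_three_zeros b z1 z2 z3 : 0 < z1 < z2 -> z2 < z3 < 1/2 ->
  K b z1 = 0 -> K b z2 = 0 -> K b z3 = 0 ->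
  exists c1 c2, z1 < c1 < z2 /\ z2 < c2 < z3 /\ Knum b c1 = 0 /\ Knum b c2 = 0.
Proof.
  intros H12 H23 K1 K2 K3.
  destruct (K_rolle b z1 z2) as (c1 & Hc1 & R1); [lra | lra | congruence |].
  destruct (K_rolle b z2 z3) as (c2 & Hc2 & R2); [lra | lra | congruence |].
  exists c1, c2. tauto.
Qed.

Lemma K_three_zeros_Knum b z1 z2 z3 : 0 < b -> 0 < z1 < z2 -> z2 < z3 < 1/2 ->
  K b z1 = 0 -> K b z2 = 0 -> K b z3 = 0 ->
  Knum b z1 < 0 /\ 0 < Knum b z2 /\ Knum b z3 < 0.
Proof.
  intros Hb H12 H23 K1 K2 K3.
  destruct (K_three_zeros b z1 z2 z3) as (c1 & c2 & Hc1 & Hc2 & R1 & R2); try assumption.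
  assert (Pos : forall u v w, 0 < u -> 0 < v -> 0 < w -> 0 < u * v * w).
  { intros u v w Hu Hv Hw. apply Rmult_lt_0_compat; [apply Rmult_lt_0_compat |]; assumption. }
  rewrite !(Knum_factor b c1 c2 R1 R2) by lra.
  pose proof (Pos b (c1 - z1) (c2 - z1)). pose proof (Pos b (z2 - c1) (c2 - z2)).
  pose proof (Pos b (z3 - c1) (z3 - c2)). repeat split; nra.
Qed.

Lemma K_no_four_zeros b z1 z2 z3 z4 : 0 < z1 < z2 -> z2 < z3 < z4 -> z4 < 1/2 ->
  K b z1 = 0 -> K b z2 = 0 -> K b z3 = 0 -> K b z4 = 0 -> False.
Proof.
  intros H12 H234 H4 K1 K2 K3 K4.
  destruct (K_three_zeros b z1 z2 z3) as (c1 & c2 & Hc1 & Hc2 & R1 & R2); try (assumption || lra).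
  destruct (K_rolle b z3 z4) as (c3 & Hc3 & R3); [lra | lra | congruence |].
  pose proof (Knum_roots_sum b c1 c2 R1 R2 ltac:(lra)).
  pose proof (Knum_roots_sum b c1 c3 R1 R3 ltac:(lra)). lra.
Qed.

Lemma K_zeros_of_three b z1 z2 z3 t : 0 < z1 < z2 -> z2 < z3 < 1/2 ->
  K b z1 = 0 -> K b z2 = 0 -> K b z3 = 0 -> 0 < t < 1/2 -> K b t = 0 ->
  t = z1 \/ t = z2 \/ t = z3.
Proof.
  intros H12 H23 K1 K2 K3 Ht Kt.
  destruct (Req_dec t z1); [tauto |]. destruct (Req_dec t z2); [tauto |].
  destruct (Req_dec t z3); [tauto |]. exfalso.
  destruct (Rlt_or_le t z1); [apply (K_no_four_zeros b t z1 z2 z3); assumption || lra |].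
  destruct (Rlt_or_le t z2); [apply (K_no_four_zeros b z1 t z2 z3); assumption || lra |].
  destruct (Rlt_or_le t z3); [apply (K_no_four_zeros b z1 z2 t z3); assumption || lra |].
  apply (K_no_four_zeros b z1 z2 z3 t); assumption || lra.
Qed.

(* A zero at which [K'] vanishes counts twice. *)
Lemma K_zeros_of_two b z1 z2 t : 0 < b -> 0 < z1 < z2 -> z2 < 1/2 ->
  K b z1 = 0 -> K b z2 = 0 -> Knum b z1 = 0 \/ Knum b z2 = 0 ->
  0 < t < 1/2 -> K b t = 0 -> t = z1 \/ t = z2.
Proof.
  intros Hb H12 H2 K1 K2 Hdouble Ht Kt.
  destruct (Req_dec t z1); [tauto |]. destruct (Req_dec t z2); [tauto |]. exfalso.
  destruct (Rlt_or_le t z1) as [L1 | L1];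
    [| destruct (Rlt_or_le t z2) as [L2 | L2]];
    [pose proof (K_three_zeros_Knum b t z1 z2) | pose proof (K_three_zeros_Knum b z1 t z2)
    | pose proof (K_three_zeros_Knum b z1 z2 t)]; lra.
Qed.

(** * F along the symmetric line *)

Definition Fsym (b t : R) : R := 2 * phi b t + phi b (1 - 2 * t).

Lemma F_orbit b t a c : orbit t a c -> F b a c = 1/4 + Fsym b t.
Proof.
  unfold Fsym. intros [E | [E | E]]; injection E; intros -> ->; rewrite F_sum_phi.
  - replace (1 - t - t) with (1 - 2 * t) by ring. ring.
  - replace (1 - (1 - 2 * t) - t) with t by ring. ring.
  - replace (1 - t - (1 - 2 * t)) with t by ring. ring.
Qed.

Lemma is_derive_Fsym b t : 0 < b -> 0 < t < 1/2 ->
  is_derive (Fsym b) t (- (2 / b) * K b t).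
Proof.
  intros Hb Ht.
  replace (- (2 / b) * K b t) with (2 * dphi b t + -2 * dphi b (1 - 2 * t)).
  - apply (is_derive_plus (fun t => 2 * phi b t) (fun t => phi b (1 - 2 * t))).
    + apply (is_derive_scal (phi b)), is_derive_phi. lra.
    + apply (is_derive_comp (phi b) (fun t => 1 - 2 * t)).
      * apply is_derive_phi. lra.
      * auto_derive; [exact I | ring].
  - transitivity (2 * (dphi b t - dphi b (1 - 2 * t))); [ring |].
    rewrite dphi_sym_diff by assumption. field. lra.
Qed.

Lemma Fsym_mean_value b x y : 0 < b -> 0 < x < y -> y < 1/2 ->
  exists c, x < c < y /\ Fsym b y - Fsym b x = - (2 / b) * (K b c * (y - x)).
Proof.
  intros Hb Hxy Hy.
  destruct (mean_value (Fsym b) (fun t => - (2 / b) * K b t) x y) as (c & Hc & E); [lra | |].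
  - intros t Ht. apply is_derive_Fsym; lra.
  - exists c. split; [exact Hc | rewrite E; ring].
Qed.

Lemma Fsym_nonincreasing b x y : 0 < b -> 0 < x <= y -> y < 1/2 ->
  (forall c, x < c < y -> 0 <= K b c) -> Fsym b y <= Fsym b x.
Proof.
  intros Hb Hxy Hy Hsign. destruct (Req_dec x y) as [-> | Hne]; [lra |].
  destruct (Fsym_mean_value b x y) as (c & Hc & E); [assumption | lra | assumption |].
  assert (0 <= 2 / b * (K b c * (y - x))); [| lra].
  apply Rmult_le_pos; [apply Rlt_le, Rdiv_lt_0_compat; lra |].
  apply Rmult_le_pos; [apply Hsign, Hc | lra].
Qed.

Lemma Fsym_nondecreasing b x y : 0 < b -> 0 < x <= y -> y < 1/2 ->
  (forall c, x < c < y -> K b c <= 0) -> Fsym b x <= Fsym b y.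
Proof.
  intros Hb Hxy Hy Hsign. destruct (Req_dec x y) as [-> | Hne]; [lra |].
  destruct (Fsym_mean_value b x y) as (c & Hc & E); [assumption | lra | assumption |].
  assert (0 <= 2 / b * (- K b c * (y - x))); [| lra].
  apply Rmult_le_pos; [apply Rlt_le, Rdiv_lt_0_compat; lra |].
  apply Rmult_le_pos; [pose proof (Hsign c Hc); lra | lra].
Qed.

Lemma Fsym_decreasing b x y : 0 < b -> 0 < x < y -> y < 1/2 ->
  (forall c, x < c < y -> 0 < K b c) -> Fsym b y < Fsym b x.
Proof.
  intros Hb Hxy Hy Hsign.
  destruct (Fsym_mean_value b x y) as (c & Hc & E); [assumption | lra | assumption |].
  assert (0 < 2 / b * (K b c * (y - x))); [| lra].
  apply Rmult_lt_0_compat; [apply Rdiv_lt_0_compat; lra |].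
  apply Rmult_lt_0_compat; [apply Hsign, Hc | lra].
Qed.

Lemma Fsym_increasing b x y : 0 < b -> 0 < x < y -> y < 1/2 ->
  (forall c, x < c < y -> K b c < 0) -> Fsym b x < Fsym b y.
Proof.
  intros Hb Hxy Hy Hsign.
  destruct (Fsym_mean_value b x y) as (c & Hc & E); [assumption | lra | assumption |].
  assert (0 < 2 / b * (- K b c * (y - x))); [| lra].
  apply Rmult_lt_0_compat; [apply Rdiv_lt_0_compat; lra |].
  apply Rmult_lt_0_compat; [pose proof (Hsign c Hc); lra | lra].
Qed.

Lemma Fsym_min_of_K_sign b lo z hi : 0 < b -> 0 <= lo < z -> z < hi <= 1/2 ->
  (forall c, lo < c < z -> 0 <= K b c) -> (forall c, z < c < hi -> K b c <= 0) ->
  forall t, lo < t < hi -> Fsym b z <= Fsym b t.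
Proof.
  intros Hb Hlo Hhi Hleft Hright t Ht. destruct (Rle_or_lt t z).
  - apply Fsym_nonincreasing; [lra | lra | lra |]. intros c Hc. apply Hleft. lra.
  - apply Fsym_nondecreasing; [lra | lra | lra |]. intros c Hc. apply Hright. lra.
Qed.

(** * From the symmetric line to the simplex *)

Lemma ln_ratio_ge m s : 0 <= s < m -> 2 * s / m <= ln (m + s) - ln (m - s).
Proof.
  intros Hs. destruct (Req_dec s 0) as [-> | Hs0].
  { replace (m + 0) with (m - 0) by ring. unfold Rdiv. lra. }
  destruct (mean_value (fun r => ln (m + r) - ln (m - r)) (fun r => / (m + r) + / (m - r)) 0 s)
    as (c & Hc & E); [lra | |].
  - intros r Hr. auto_derive; [lra |]. field. lra.
  - replace (m + 0) with (m - 0) in E by ring.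
    assert (D : / (m + c) + / (m - c) - 2 / m = 2 * (c * c) / (m * ((m + c) * (m - c))))
      by (field; lra).
    assert (0 <= (/ (m + c) + / (m - c) - 2 / m) * s).
    { rewrite D. apply Rmult_le_pos; [| lra]. apply Rmult_le_pos; [nra |].
      apply Rlt_le, Rinv_0_lt_compat. apply Rmult_lt_0_compat; nra. }
    unfold Rdiv in *. nra.
Qed.

Lemma phi_double b m : 0 < b -> 0 <= m -> b * m <= 2/3 -> 2 * phi b m <= phi b (2 * m).
Proof.
  intros Hb Hm Hbm. destruct (Req_dec m 0) as [-> | Hm0].
  { rewrite Rmult_0_r, phi_0. lra. }
  unfold phi. rewrite !plogp_pos by lra.
  replace (3 * (2 * m)) with (2 * (3 * m)) by ring. rewrite (ln_mult 2 (3 * m)) by lra.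
  assert (3/2 * m * m * b <= 2 * m * ln 2) by (pose proof ln_lt_2; nra).
  assert (3/2 * m * m <= 2 * m * ln 2 * / b).
  { replace (3/2 * m * m) with (3/2 * m * m * b * / b) by (field; lra).
    apply Rmult_le_compat_r; [apply Rlt_le, Rinv_0_lt_compat |]; lra. }
  match goal with
  | |- ?l <= ?r => assert (r - l = 2 * m * ln 2 * / b - 3/2 * m * m) by (field; lra)
  end.
  lra.
Qed.

Lemma dphi_reflect_le b m s : 0 < b -> 0 <= s < m -> b * m <= 2/3 ->
  dphi b (m - s) <= dphi b (m + s).
Proof.
  intros Hb Hs Hbm. pose proof (ln_ratio_ge m s Hs) as L.
  unfold dphi. rewrite !ln_mult by lra.
  assert (3 * s <= / b * (2 * s / m)).
  { replace (/ b * (2 * s / m)) with (s * / (b * m) * 2) by (field; lra).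
    assert (3/2 <= / (b * m)); [| nra].
    replace (3/2) with (/ (2/3)) by field. apply Rinv_le_contravar; nra. }
  assert (/ b * (2 * s / m) <= / b * (ln (m + s) - ln (m - s)))
    by (apply Rmult_le_compat_l; [apply Rlt_le, Rinv_0_lt_compat |]; lra).
  lra.
Qed.

Lemma phi_midpoint b u v : 0 < b -> 0 <= u -> 0 <= v -> b * (u + v) <= 4/3 ->
  2 * phi b ((u + v) / 2) <= phi b u + phi b v.
Proof.
  intros Hb.
  assert (Sorted : forall u v, 0 <= u <= v -> b * (u + v) <= 4/3 ->
            2 * phi b ((u + v) / 2) <= phi b u + phi b v).
  { clear u v. intros u v Huv Hm. set (m := (u + v) / 2).
    destruct (Req_dec u 0) as [-> | Hu0].
    { rewrite phi_0, Rplus_0_l. replace v with (2 * m) by (unfold m; field).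
      apply phi_double; unfold m in *; lra. }
    destruct (Req_dec u v) as [<- | Huv'].
    { unfold m. replace ((u + u) / 2) with u by field. lra. }
    destruct (mean_value (fun w => phi b w + phi b (2 * m - w))
                (fun w => dphi b w - dphi b (2 * m - w)) m v) as (c & Hc & E);
      [unfold m; lra | intros w Hw; apply is_derive_phi_pair; unfold m in *; lra |].
    replace (2 * m - v) with u in E by (unfold m; field).
    replace (2 * m - m) with m in E by ring.
    pose proof (dphi_reflect_le b m (c - m) Hb ltac:(unfold m in *; lra)
                  ltac:(unfold m in *; lra)) as D.
    replace (m - (c - m)) with (2 * m - c) in D by ring.
    replace (m + (c - m)) with c in D by ring.
    nra. }
  intros Hu Hv Hm. destruct (Rle_or_lt u v).
  - apply Sorted; [lra | lra].
  - replace (u + v) with (v + u) by ring. rewrite (Rplus_comm (phi b u)). apply Sorted; lra.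
Qed.

Lemma dphi_antitone b x y : 0 < b -> 2/3 <= b * x -> x <= y -> dphi b y <= dphi b x.
Proof.
  intros Hb Hx Hxy. destruct (Req_dec x y) as [-> | Hne]; [lra |].
  apply Rlt_le, dphi_decreasing; lra.
Qed.

Lemma phi_spread b u v : 0 < b -> 2/3 <= b * u -> 2/3 <= b * v ->
  phi b (2 / (3 * b)) + phi b (u + v - 2 / (3 * b)) <= phi b u + phi b v.
Proof.
  intros Hb.
  assert (Hp : b * (2 / (3 * b)) = 2/3) by (field; lra).
  assert (Sorted : forall u v, 2/3 <= b * u -> u <= v ->
            phi b (2 / (3 * b)) + phi b (u + v - 2 / (3 * b)) <= phi b u + phi b v).
  { clear u v. intros u v Hu Huv. set (p := 2 / (3 * b)) in *. set (S := u + v).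
    replace v with (S - u) by (unfold S; ring).
    destruct (Req_dec p u) as [<- | Hne]; [lra |].
    destruct (mean_value (fun w => phi b w + phi b (S - w))
                (fun w => dphi b w - dphi b (S - w)) p u) as (c & Hc & E); [nra | |].
    - intros w Hw. apply is_derive_phi_pair; unfold S; nra.
    - assert (dphi b (S - c) <= dphi b c) by (apply dphi_antitone; unfold S; nra).
      nra. }
  intros Hu Hv. destruct (Rle_or_lt u v).
  - apply Sorted; lra.
  - replace (u + v) with (v + u) by ring. rewrite (Rplus_comm (phi b u)). apply Sorted; lra.
Qed.

Lemma phi_tangent b c y : 0 < b -> 2/3 <= b * c -> 2/3 <= b * y ->
  phi b y <= phi b c + dphi b c * (y - c).
Proof.
  intros Hb Hc Hy. destruct (Rtotal_order c y) as [Hlt | [<- | Hgt]]; [| lra |].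
  - destruct (mean_value (phi b) (dphi b) c y) as (d & Hd & E); [exact Hlt | |].
    + intros x Hx. apply is_derive_phi. nra.
    + assert (dphi b d <= dphi b c) by (apply dphi_antitone; lra). nra.
  - destruct (mean_value (phi b) (dphi b) y c) as (d & Hd & E); [exact Hgt | |].
    + intros x Hx. apply is_derive_phi. nra.
    + assert (dphi b c <= dphi b d) by (apply dphi_antitone; nra). nra.
Qed.

(* Averaging the two smallest coordinates below [2/(3b)] and pushing the others
   apart above it both decrease [F]. *)
Lemma Fsym_le_sum_phi_sorted b a u v : 0 < b -> 0 <= a <= u -> u <= v -> a + u + v = 1 ->
  exists t, 0 <= t /\ b * t <= 2/3 /\ t < 1/2 /\ Fsym b t <= phi b a + phi b u + phi b v.
Proof.
  intros Hb Hau Huv Hs. unfold Fsym.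
  assert (Hp : b * (2 / (3 * b)) = 2/3) by (field; lra).
  destruct (Rle_or_lt (b * (a + u)) (4/3)) as [Hsmall | Hbig].
  - exists ((a + u) / 2). split; [lra |]. split; [lra |]. split; [lra |].
    replace (1 - 2 * ((a + u) / 2)) with v by lra.
    pose proof (phi_midpoint b a u Hb ltac:(lra) ltac:(lra) Hsmall). lra.
  - destruct (Rle_or_lt (b * a) (2/3)) as [Ha | Ha].
    + pose proof (phi_spread b u v Hb ltac:(nra) ltac:(nra)).
      pose proof (phi_midpoint b a (2 / (3 * b)) Hb ltac:(lra) ltac:(nra) ltac:(lra)).
      set (p := 2 / (3 * b)) in *.
      exists ((a + p) / 2). split; [nra |]. split; [lra |]. split; [nra |].
      replace (1 - 2 * ((a + p) / 2)) with (u + v - p) by lra. lra.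
    + pose proof (phi_spread b a u Hb ltac:(lra) ltac:(nra)).
      pose proof (phi_spread b (a + u - 2 / (3 * b)) v Hb ltac:(nra) ltac:(nra)).
      set (p := 2 / (3 * b)) in *.
      exists p. split; [nra |]. split; [lra |]. split; [nra |].
      replace (a + u - p + v - p) with (1 - 2 * p) in * by lra. lra.
Qed.

Lemma Fsym_le_sum_phi b a u v : 0 < b -> 0 <= a -> 0 <= u -> 0 <= v -> a + u + v = 1 ->
  exists t, 0 <= t /\ b * t <= 2/3 /\ t < 1/2 /\ Fsym b t <= phi b a + phi b u + phi b v.
Proof.
  intros Hb Ha Hu Hv Hs.
  destruct (Rle_or_lt a u), (Rle_or_lt u v), (Rle_or_lt a v);
  first
    [ destruct (Fsym_le_sum_phi_sorted b a u v) as (t & Ht); [lra .. | exists t; lra]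
    | destruct (Fsym_le_sum_phi_sorted b a v u) as (t & Ht); [lra .. | exists t; lra]
    | destruct (Fsym_le_sum_phi_sorted b u a v) as (t & Ht); [lra .. | exists t; lra]
    | destruct (Fsym_le_sum_phi_sorted b u v a) as (t & Ht); [lra .. | exists t; lra]
    | destruct (Fsym_le_sum_phi_sorted b v a u) as (t & Ht); [lra .. | exists t; lra]
    | destruct (Fsym_le_sum_phi_sorted b v u a) as (t & Ht); [lra .. | exists t; lra] ].
Qed.

(* The entropy term [t log(3t)] has infinite slope at [0], so small [t > 0] beat the vertex. *)
Lemma Fsym_below_vertex b : 0 < b ->
  exists t, 0 < t /\ b * t <= 2/3 /\ t < 1/2 /\ Fsym b t <= Fsym b 0.
Proof.
  intros Hb. set (e := exp (- (3/2) * b) / 3).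
  assert (He : 0 < e) by (unfold e; pose proof (exp_pos (- (3/2) * b)); lra).
  set (t := Rmin (Rmin (2 / (3 * b)) (1/3)) e).
  assert (Ht0 : 0 < t) by (unfold t; repeat apply Rmin_pos; [apply Rdiv_lt_0_compat | |]; lra).
  assert (Htp : t <= 2 / (3 * b)) by (unfold t; eapply Rle_trans; apply Rmin_l).
  assert (Ht3 : t <= 1/3) by (unfold t; eapply Rle_trans; [apply Rmin_l | apply Rmin_r]).
  assert (Hte : t <= e) by (unfold t; apply Rmin_r).
  assert (b * (2 / (3 * b)) = 2/3) by (field; lra).
  exists t. split; [exact Ht0 |]. split; [nra |]. split; [lra |].
  unfold Fsym. rewrite phi_0. replace (1 - 2 * 0) with 1 by ring. unfold phi.
  rewrite !plogp_pos by lra. set (w := 1 - 2 * t).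
  assert (Hl3 : 0 < ln 3) by (rewrite <- ln_1; apply ln_increasing; lra).
  assert (Hw : 0 <= w * ln (3 * w) <= ln 3).
  { assert (0 <= ln (3 * w) <= ln 3); [| unfold w in *; split; nra].
    split; [rewrite <- ln_1 |]; apply ln_le; unfold w; lra. }
  assert (Hlt : ln (3 * t) <= - (3/2) * b).
  { rewrite <- (ln_exp (- (3/2) * b)). apply ln_le; [lra |]. unfold e in Hte. lra. }
  assert (Hib : 0 < / b) by (apply Rinv_0_lt_compat, Hb).
  assert (/ b * (t * ln (3 * t)) <= - (3/2) * t).
  { replace (- (3/2) * t) with (/ b * (t * (- (3/2) * b))) by (field; lra).
    apply Rmult_le_compat_l; [lra |]. apply Rmult_le_compat_l; lra. }
  assert (/ b * (w * ln (3 * w)) <= / b * ln 3) by (apply Rmult_le_compat_l; lra).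
  replace (3 * 1) with 3 by ring. unfold w in *. nra.
Qed.

Lemma global_min_of_Fsym b ts : 0 < b ->
  (forall t, 0 < t -> b * t <= 2/3 -> t < 1/2 -> Fsym b ts <= Fsym b t) ->
  forall a c, orbit ts a c -> global_min b a c.
Proof.
  intros Hb Hmin a c Horb y1 y2 (H1 & H2 & H3).
  rewrite (F_orbit b ts a c Horb), F_sum_phi.
  destruct (Fsym_le_sum_phi b (1 - y1 - y2) y1 y2) as (t & Ht0 & Htp & Ht2 & Hle);
    [assumption | lra .. | ring |].
  destruct (Req_dec t 0) as [-> | Hne].
  - destruct (Fsym_below_vertex b Hb) as (t' & Ht'). pose proof (Hmin t'). lra.
  - pose proof (Hmin t). lra.
Qed.

Lemma sum_phi_ge_Fsym b u v w : 0 < b -> 0 <= u -> 0 <= v -> u + v + w = 1 ->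
  b * (u + v) <= 4/3 -> Fsym b ((u + v) / 2) <= phi b u + phi b v + phi b w.
Proof.
  intros Hb Hu Hv Hs Hm. unfold Fsym. replace (1 - 2 * ((u + v) / 2)) with w by lra.
  pose proof (phi_midpoint b u v Hb Hu Hv Hm). lra.
Qed.

Lemma coords_of_dist y1 y2 a c d : 0 < d -> (y1 - a) ^ 2 + (y2 - c) ^ 2 < d ^ 2 ->
  - d < y1 - a < d /\ - d < y2 - c < d.
Proof.
  intros Hd H. pose proof (pow2_ge_0 (y1 - a)). pose proof (pow2_ge_0 (y2 - c)).
  split; split; nra.
Qed.

Lemma local_min_of_Fsym b ts lo hi : 0 < b -> 0 <= lo < ts -> ts < hi <= 1/2 ->
  b * ts < 2/3 -> (forall t, lo < t < hi -> Fsym b ts <= Fsym b t) ->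
  forall a c, orbit ts a c -> local_min b a c.
Proof.
  intros Hb Hlo Hhi Hbts Hmin a c Horb.
  set (d := Rmin (Rmin (ts - lo) (hi - ts)) ((2/3 - b * ts) / b)).
  assert (Hd0 : 0 < d)
    by (unfold d; repeat apply Rmin_pos; [lra | lra | apply Rdiv_lt_0_compat; lra]).
  assert (Hd1 : d <= ts - lo) by (unfold d; eapply Rle_trans; apply Rmin_l).
  assert (Hd2 : d <= hi - ts) by (unfold d; eapply Rle_trans; [apply Rmin_l | apply Rmin_r]).
  assert (Hd3 : b * d <= 2/3 - b * ts).
  { assert (d <= (2/3 - b * ts) / b) by (unfold d; apply Rmin_r).
    assert (b * ((2/3 - b * ts) / b) = 2/3 - b * ts) by (field; lra). nra. }
  exists d. split; [exact Hd0 |]. intros y1 y2 (H1 & H2 & H3) Hdist.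
  rewrite (F_orbit b ts a c Horb), F_sum_phi.
  destruct Horb as [E | [E | E]]; injection E; intros -> ->;
    destruct (coords_of_dist _ _ _ _ _ Hd0 Hdist) as (D1 & D2).
  - pose proof (sum_phi_ge_Fsym b y1 y2 (1 - y1 - y2) Hb H1 H2 ltac:(ring) ltac:(nra)).
    pose proof (Hmin ((y1 + y2) / 2) ltac:(lra)). lra.
  - pose proof (sum_phi_ge_Fsym b (1 - y1 - y2) y2 y1 Hb ltac:(lra) H2 ltac:(ring) ltac:(nra)).
    pose proof (Hmin ((1 - y1 - y2 + y2) / 2) ltac:(lra)). lra.
  - pose proof (sum_phi_ge_Fsym b (1 - y1 - y2) y1 y2 Hb ltac:(lra) H1 ltac:(ring) ltac:(nra)).
    pose proof (Hmin ((1 - y1 - y2 + y1) / 2) ltac:(lra)). lra.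
Qed.

Lemma not_local_min_of_Fsym b ts :
  (forall e, 0 < e -> exists t, 0 < t < 1/2 /\ Rabs (t - ts) < e /\ Fsym b t < Fsym b ts) ->
  forall a c, orbit ts a c -> ~ local_min b a c.
Proof.
  intros Hdesc a c Horb (eps & Heps & Hmin).
  destruct (Hdesc (eps / 3)) as (t & Ht & Hd & Hlt); [lra |]. apply Rabs_def2 in Hd.
  rewrite (F_orbit b ts a c Horb) in Hmin.
  destruct Horb as [E | [E | E]]; injection E; intros -> ->.
  - pose proof (Hmin t t ltac:(unfold in_Xi; lra) ltac:(nra)).
    rewrite (F_orbit b t t t (orbit_diag t)) in *. lra.
  - pose proof (Hmin (1 - 2 * t) t ltac:(unfold in_Xi; lra) ltac:(nra)).
    rewrite (F_orbit b t _ _ (orbit_fst t)) in *. lra.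
  - pose proof (Hmin t (1 - 2 * t) ltac:(unfold in_Xi; lra) ltac:(nra)).
    rewrite (F_orbit b t _ _ (orbit_snd t)) in *. lra.
Qed.

Lemma not_local_min_of_K_pos_right b ts d : 0 < b -> 0 < ts -> 0 < d -> ts + d < 1/2 ->
  (forall t, ts < t < ts + d -> 0 < K b t) -> forall a c, orbit ts a c -> ~ local_min b a c.
Proof.
  intros Hb Hts Hd Hsum Hpos. apply not_local_min_of_Fsym. intros e He.
  pose proof (Rmin_l (e / 2) d). pose proof (Rmin_r (e / 2) d).
  assert (0 < Rmin (e / 2) d) by (apply Rmin_pos; lra).
  exists (ts + Rmin (e / 2) d). split; [lra |].
  split; [rewrite Rabs_pos_eq; lra |].
  apply Fsym_decreasing; [lra | lra | lra |]. intros t Ht. apply Hpos. lra.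
Qed.

Lemma not_local_min_of_K_neg_left b ts d : 0 < b -> 0 < ts - d -> 0 < d -> ts < 1/2 ->
  (forall t, ts - d < t < ts -> K b t < 0) -> forall a c, orbit ts a c -> ~ local_min b a c.
Proof.
  intros Hb Hts Hd Hlt Hneg. apply not_local_min_of_Fsym. intros e He.
  pose proof (Rmin_l (e / 2) d). pose proof (Rmin_r (e / 2) d).
  assert (0 < Rmin (e / 2) d) by (apply Rmin_pos; lra).
  exists (ts - Rmin (e / 2) d). split; [lra |].
  split; [rewrite Rabs_left; lra |].
  apply Fsym_increasing; [lra | lra | lra |]. intros t Ht. apply Hneg. lra.
Qed.

(* Above [2/(3b)] [phi b] lies below its tangents, and the tangent terms at [(1/3,1/3,1/3)]
   sum to zero. *)
Lemma local_max_third b : 2 < b -> local_max b (1/3) (1/3).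
Proof.
  intros Hb. set (r := (b - 2) / (6 * b)).
  assert (Hr : b * r = (b - 2) / 6) by (unfold r; field; lra).
  assert (0 < r) by (unfold r; apply Rdiv_lt_0_compat; lra).
  exists r. split; [assumption |]. intros y1 y2 (H1 & H2 & H3) Hd.
  destruct (coords_of_dist y1 y2 (1/3) (1/3) r ltac:(assumption) Hd) as (D1 & D2).
  rewrite !F_sum_phi. replace (1 - 1/3 - 1/3) with (1/3) by field.
  pose proof (phi_tangent b (1/3) y1 ltac:(lra) ltac:(lra) ltac:(nra)).
  pose proof (phi_tangent b (1/3) y2 ltac:(lra) ltac:(lra) ltac:(nra)).
  pose proof (phi_tangent b (1/3) (1 - y1 - y2) ltac:(lra) ltac:(lra) ltac:(nra)).
  assert (dphi b (1/3) * (y1 - 1/3) + dphi b (1/3) * (y2 - 1/3)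
          + dphi b (1/3) * (1 - y1 - y2 - 1/3) = 0) by field.
  lra.
Qed.

(** * The Hessian at symmetric points *)

Lemma hess_det_orbit b t a c : 0 < b -> 0 < t < 1/2 -> orbit t a c ->
  hess_det b a c = - (d2phi b t * Knum b t) / (2 * b * t * (1 - 2 * t)).
Proof.
  intros Hb Ht Horb. rewrite hess_det_eq by (lra || exact (orbit_in_int_Xi t a c Ht Horb)).
  destruct Horb as [E | [E | E]]; injection E; intros -> ->;
    [replace (1 - t - t) with (1 - 2 * t) by ring
    | replace (1 - (1 - 2 * t) - t) with t by ring
    | replace (1 - t - (1 - 2 * t)) with t by ring];
    unfold d2phi, Knum; field; lra.
Qed.

Lemma eigenvalues_of_neg_det h11 h12 h21 h22 : h11 * h22 - h12 * h21 < 0 ->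
  exists l1 l2, 0 < l1 /\ l2 < 0 /\
    (h11 - l1) * (h22 - l1) - h12 * h21 = 0 /\ (h11 - l2) * (h22 - l2) - h12 * h21 = 0.
Proof.
  intros Hd. set (tr := h11 + h22). set (D := tr * tr - 4 * (h11 * h22 - h12 * h21)).
  assert (HD : 0 <= D) by (unfold D; nra).
  pose proof (sqrt_sqrt D HD) as Hs. pose proof (sqrt_pos D).
  assert (tr * tr < sqrt D * sqrt D) by (rewrite Hs; unfold D; lra).
  exists ((tr + sqrt D) / 2), ((tr - sqrt D) / 2).
  split; [nra |]. split; [nra |].
  split; [replace ((h11 - (tr + sqrt D) / 2) * (h22 - (tr + sqrt D) / 2) - h12 * h21)
            with ((sqrt D * sqrt D - D) / 4) by (unfold D, tr; field)
         | replace ((h11 - (tr - sqrt D) / 2) * (h22 - (tr - sqrt D) / 2) - h12 * h21)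
            with ((sqrt D * sqrt D - D) / 4) by (unfold D, tr; field)];
    rewrite Hs; field.
Qed.

Lemma saddle_of_orbit b t a c : 0 < b -> 0 < t < 1/2 -> K b t = 0 -> orbit t a c ->
  0 < d2phi b t * Knum b t -> saddle b a c.
Proof.
  intros Hb Ht HK Horb Hpos. split; [apply (critical_of_orbit b t); assumption |].
  apply eigenvalues_of_neg_det. fold (hess_det b a c).
  rewrite (hess_det_orbit b t a c Hb Ht Horb).
  assert (0 < (d2phi b t * Knum b t) / (2 * b * t * (1 - 2 * t))); [| unfold Rdiv in *; lra].
  apply Rdiv_lt_0_compat; [assumption |].
  apply Rmult_lt_0_compat; [apply Rmult_lt_0_compat |]; lra.
Qed.

Lemma degenerate_of_orbit b t a c : 0 < b -> 0 < t < 1/2 -> K b t = 0 -> orbit t a c ->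
  d2phi b t * Knum b t = 0 -> degenerate_critical b a c.
Proof.
  intros Hb Ht HK Horb Hzero. split; [apply (critical_of_orbit b t); assumption |].
  rewrite (hess_det_orbit b t a c Hb Ht Horb), Hzero. unfold Rdiv. ring.
Qed.

Lemma critical_iff_orbit_in b (Z : R -> Prop) : 0 < b ->
  (forall t, Z t -> 0 < t < 1/2 /\ K b t = 0) ->
  (forall t, 0 < t < 1/2 -> K b t = 0 -> Z t) ->
  forall x1 x2, in_int_Xi x1 x2 -> critical b x1 x2 <-> exists t, Z t /\ orbit t x1 x2.
Proof.
  intros Hb Hzeros Hall x1 x2 HX. rewrite (critical_iff_orbit b x1 x2 Hb HX).
  split; intros (t & H1 & H2).
  - exists t. split; [apply Hall |]; tauto.
  - exists t. pose proof (Hzeros t H1). tauto.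
Qed.

Lemma exists_orbit_third x1 x2 :
  (exists t, t = 1/3 /\ orbit t x1 x2) <-> (x1, x2) = (1/3, 1/3).
Proof.
  split; [intros (t & -> & H); apply orbit_third, H |].
  intros E. exists (1/3). split; [reflexivity | left; exact E].
Qed.

Lemma exists_orbit_or (P Q : R -> Prop) x1 x2 :
  (exists t, (P t \/ Q t) /\ orbit t x1 x2) <->
  (exists t, P t /\ orbit t x1 x2) \/ (exists t, Q t /\ orbit t x1 x2).
Proof. firstorder. Qed.

Lemma exists_orbit_eq p x1 x2 : (exists t, t = p /\ orbit t x1 x2) <-> orbit p x1 x2.
Proof. split; [intros (t & -> & H); exact H | intros H; exists p; tauto]. Qed.

Lemma critical_iff_two_orbits b p : 0 < b -> 0 < p < 1/2 -> K b p = 0 ->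
  (forall t, 0 < t < 1/2 -> K b t = 0 -> t = p \/ t = 1/3) ->
  forall x1 x2, in_int_Xi x1 x2 ->
    critical b x1 x2 <->
      (x1, x2) = (p, p) \/ (x1, x2) = (1 - 2 * p, p) \/
      (x1, x2) = (p, 1 - 2 * p) \/ (x1, x2) = (1/3, 1/3).
Proof.
  intros Hb Hp Kp Hall x1 x2 HX.
  assert (Hz : forall t, t = p \/ t = 1/3 -> 0 < t < 1/2 /\ K b t = 0).
  { intros t [-> | ->]; split; [lra | assumption | lra | apply K_third]. }
  rewrite (critical_iff_orbit_in b _ Hb Hz Hall x1 x2 HX), exists_orbit_or,
    exists_orbit_third, exists_orbit_eq.
  unfold orbit. tauto.
Qed.

Lemma critical_iff_three_orbits b p q : 0 < b -> 0 < p < 1/2 -> 0 < q < 1/2 ->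
  K b p = 0 -> K b q = 0 ->
  (forall t, 0 < t < 1/2 -> K b t = 0 -> t = p \/ t = 1/3 \/ t = q) ->
  forall x1 x2, in_int_Xi x1 x2 ->
    critical b x1 x2 <->
      (x1, x2) = (p, p) \/ (x1, x2) = (1 - 2 * p, p) \/
      (x1, x2) = (p, 1 - 2 * p) \/ (x1, x2) = (1/3, 1/3) \/
      (x1, x2) = (q, q) \/ (x1, x2) = (1 - 2 * q, q) \/
      (x1, x2) = (q, 1 - 2 * q).
Proof.
  intros Hb Hp Hq Kp Kq Hall x1 x2 HX.
  assert (Hz : forall t, t = p \/ t = 1/3 \/ t = q -> 0 < t < 1/2 /\ K b t = 0).
  { intros t [-> | [-> | ->]]; split; [lra | assumption | lra | apply K_third | lra | assumption]. }
  rewrite (critical_iff_orbit_in b _ Hb Hz Hall x1 x2 HX), !exists_orbit_or,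
    exists_orbit_third, !exists_orbit_eq.
  unfold orbit. tauto.
Qed.

(** * The regimes of beta *)

Lemma f0_third : f0 (1/3) = 2.
Proof. unfold f0. destruct (Req_EM_T (1/3) (1/3)); [reflexivity | lra]. Qed.

Lemma f0_K b t : 0 < t < 1/2 -> t <> 1/3 -> (f0 t - b) * (1 - 3 * t) = 2/3 * K b t.
Proof.
  intros Ht Hn. unfold f0, K. destruct (Req_EM_T t (1/3)) as [E | _]; [contradiction |].
  rewrite ln_div by lra. field. intros E. apply Hn. lra.
Qed.

Lemma K_zero_iff_f0 b t : 0 < t < 1/2 -> t <> 1/3 -> K b t = 0 <-> f0 t = b.
Proof.
  intros Ht Hn. pose proof (f0_K b t Ht Hn) as E.
  assert (1 - 3 * t <> 0) by (intros E'; apply Hn; lra).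
  split; intros H'.
  - rewrite H' in E.
    destruct (Rmult_integral _ _ (eq_trans E (Rmult_0_r _))); [lra | contradiction].
  - rewrite H' in E. lra.
Qed.

Lemma ln2_lt_3_4 : ln 2 < 3/4.
Proof.
  assert (h : ln 2 < ln ((9/8) ^ 6)) by (apply ln_increasing; simpl; lra).
  rewrite ln_pow in h by lra.
  pose proof (exp_ineq1_le (ln (9/8))) as Hexp. rewrite exp_ln in Hexp by lra.
  simpl in h. lra.
Qed.

Lemma f0_quarter_lt_2 : f0 (1/4) < 2.
Proof.
  unfold f0. destruct (Req_EM_T (1/4) (1/3)); [lra |].
  replace ((1 - 2 * (1/4)) / (1/4)) with 2 by field.
  replace (2 / (3 * (1 - 3 * (1/4)))) with (8/3) by field.
  pose proof ln2_lt_3_4. lra.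
Qed.

Lemma f0_pos t : 0 < t < 1/2 -> 0 < f0 t.
Proof.
  intros Ht. unfold f0. destruct (Req_EM_T t (1/3)) as [_ | Hne]; [lra |].
  destruct (Rlt_or_le t (1/3)).
  - apply Rmult_lt_0_compat; [apply Rdiv_lt_0_compat; lra |].
    rewrite <- ln_1. apply ln_increasing; [lra |].
    apply (Rmult_lt_reg_r t); [lra |]. unfold Rdiv. rewrite Rmult_assoc, Rinv_l; lra.
  - assert (ln ((1 - 2 * t) / t) < 0).
    { rewrite <- ln_1. apply ln_increasing; [apply Rdiv_lt_0_compat; lra |].
      apply (Rmult_lt_reg_r t); [lra |]. unfold Rdiv. rewrite Rmult_assoc, Rinv_l; lra. }
    assert (0 < 2 / (3 * (3 * t - 1))) by (apply Rdiv_lt_0_compat; lra).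
    replace (2 / (3 * (1 - 3 * t))) with (- (2 / (3 * (3 * t - 1)))) by (field; lra).
    nra.
Qed.

Section Minimum_of_f0.

Variable m0 : R.
Hypotheses (Hm0 : 0 < m0 < 1/2) (Hmin : forall t, 0 < t < 1/2 -> f0 m0 <= f0 t).

Lemma K_nonneg_below_third b t : b <= f0 m0 -> 0 < t <= 1/3 -> 0 <= K b t.
Proof.
  intros Hb Ht. destruct (Req_dec t (1/3)) as [-> | Hne]; [rewrite K_third; lra |].
  pose proof (f0_K b t ltac:(lra) Hne). pose proof (Hmin t ltac:(lra)).
  assert (0 <= (f0 t - b) * (1 - 3 * t)) by (apply Rmult_le_pos; lra). lra.
Qed.

Lemma K_nonpos_above_third b t : b <= f0 m0 -> 1/3 <= t < 1/2 -> K b t <= 0.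
Proof.
  intros Hb Ht. destruct (Req_dec t (1/3)) as [-> | Hne]; [rewrite K_third; lra |].
  pose proof (f0_K b t ltac:(lra) Hne). pose proof (Hmin t ltac:(lra)).
  assert (0 <= (f0 t - b) * (3 * t - 1)) by (apply Rmult_le_pos; lra). lra.
Qed.

Lemma beta3_lt_2 : f0 m0 < 2.
Proof. pose proof (Hmin (1/4) ltac:(lra)). pose proof f0_quarter_lt_2. lra. Qed.

Lemma m0_neq_third : m0 <> 1/3.
Proof. intros E. pose proof beta3_lt_2. rewrite E, f0_third in *. lra. Qed.

Lemma K_m0 : K (f0 m0) m0 = 0.
Proof. apply (K_zero_iff_f0 (f0 m0) m0 Hm0 m0_neq_third). reflexivity. Qed.

Lemma beta3_pos : 0 < f0 m0.
Proof. apply f0_pos, Hm0. Qed.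

(* By Rolle a zero of [K] beyond [1/3] gives a root [c > 1/3] of [K'], and then [K]
   increases from [K(1/3) = 0] to [K(c)], against [K <= 0] on [[1/3, 1/2)]. *)
Lemma m0_lt_third : m0 < 1/3.
Proof.
  destruct (Rlt_or_le m0 (1/3)) as [H | H]; [exact H |]. exfalso.
  assert (H' : 1/3 < m0) by (pose proof m0_neq_third; lra).
  destruct (K_rolle (f0 m0) (1/3) m0) as (c & Hc & Rc);
    [lra | lra | rewrite K_third; symmetry; exact K_m0 |].
  assert (Rc' : Knum (f0 m0) (1/2 - c) = 0) by (unfold Knum in *; rewrite <- Rc; field).
  pose proof (K_increasing_mid (f0 m0) (1/2 - c) c beta3_pos Rc' Rc ltac:(lra)
                (1/3) c ltac:(lra) ltac:(lra)) as Hinc.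
  rewrite K_third in Hinc. pose proof (K_nonpos_above_third (f0 m0) c ltac:(lra) ltac:(lra)).
  lra.
Qed.

Lemma Knum_m0 : Knum (f0 m0) m0 = 0.
Proof.
  pose proof m0_lt_third. apply (Knum_zero_of_local_min _ _ (m0 / 2) (1/3)); [lra .. |].
  intros t Ht. rewrite K_m0. apply K_nonneg_below_third; lra.
Qed.

Lemma global_min_third b : 0 < b <= f0 m0 -> global_min b (1/3) (1/3).
Proof.
  intros Hb. apply (global_min_of_Fsym b (1/3)); [lra | | apply orbit_diag].
  intros t Ht _ Ht2. apply (Fsym_min_of_K_sign b 0 (1/3) (1/2)); [lra .. | | | lra];
    intros c Hc; [apply K_nonneg_below_third | apply K_nonpos_above_third]; lra.
Qed.

Lemma regime_below_beta3 b : 0 < b < f0 m0 ->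
  (forall x1 x2, in_int_Xi x1 x2 -> (critical b x1 x2 <-> (x1, x2) = (1/3, 1/3))) /\
  global_min b (1/3) (1/3).
Proof.
  intros Hb. split; [| apply global_min_third; lra].
  assert (Hz : forall t, t = 1/3 -> 0 < t < 1/2 /\ K b t = 0).
  { intros t ->. split; [lra | apply K_third]. }
  assert (Hall : forall t, 0 < t < 1/2 -> K b t = 0 -> t = 1/3).
  { intros t Ht HK. destruct (Req_dec t (1/3)) as [E | Hne]; [exact E |].
    apply (K_zero_iff_f0 b t Ht Hne) in HK. pose proof (Hmin t Ht). lra. }
  intros x1 x2 HX.
  rewrite (critical_iff_orbit_in b _ ltac:(lra) Hz Hall x1 x2 HX), exists_orbit_third.
  reflexivity.
Qed.

Lemma regime_at_beta3 :
  (forall x1 x2, in_int_Xi x1 x2 ->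
     (critical (f0 m0) x1 x2 <->
        (x1, x2) = (m0, m0) \/ (x1, x2) = (1 - 2 * m0, m0) \/
        (x1, x2) = (m0, 1 - 2 * m0) \/ (x1, x2) = (1/3, 1/3))) /\
  (degenerate_critical (f0 m0) m0 m0 /\ ~ local_min (f0 m0) m0 m0) /\
  (degenerate_critical (f0 m0) (1 - 2 * m0) m0 /\ ~ local_min (f0 m0) (1 - 2 * m0) m0) /\
  (degenerate_critical (f0 m0) m0 (1 - 2 * m0) /\ ~ local_min (f0 m0) m0 (1 - 2 * m0)) /\
  global_min (f0 m0) (1/3) (1/3).
Proof.
  pose proof m0_lt_third. pose proof beta3_pos as Hpos.
  pose proof K_m0 as HK. pose proof Knum_m0 as HKn.
  set (B := f0 m0) in *.
  destruct (K_rolle B m0 (1/3)) as (c & Hc & Rc); [lra | lra | rewrite K_third; assumption |].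
  assert (Horb : forall a c, orbit m0 a c -> degenerate_critical B a c /\ ~ local_min B a c).
  { intros a c' Horb. split.
    - apply (degenerate_of_orbit B m0); [lra | lra | assumption | assumption |].
      rewrite HKn. ring.
    - (* [m0] is the smaller root of [K'], so [K] increases from [0] just after it *)
      apply (not_local_min_of_K_pos_right B m0 (c - m0)); [lra .. | | exact Horb].
      intros t Ht. rewrite <- HK. apply (K_increasing_mid B m0 c); lra. }
  destruct (orbit_all _ m0 Horb) as (H1 & H2 & H3).
  refine (conj _ (conj H1 (conj H2 (conj H3 (global_min_third B (conj Hpos (Rle_refl B))))))).
  apply (critical_iff_two_orbits B m0); [lra | lra | exact HK |].
  intros t Ht Kt. apply (K_zeros_of_two B m0 (1/3) t);
    [lra | lra | lra | exact HK | apply K_third | left; exact HKn | exact Ht | exact Kt].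
Qed.

End Minimum_of_f0.

Lemma regime_between b p q : 0 < b < 2 -> 0 < p < 1/3 -> p < q < 1/2 ->
  f0 p = b -> f0 q = b ->
  (forall x1 x2, in_int_Xi x1 x2 ->
     (critical b x1 x2 <->
        (x1, x2) = (p, p) \/ (x1, x2) = (1 - 2 * p, p) \/
        (x1, x2) = (p, 1 - 2 * p) \/ (x1, x2) = (1/3, 1/3) \/
        (x1, x2) = (q, q) \/ (x1, x2) = (1 - 2 * q, q) \/
        (x1, x2) = (q, 1 - 2 * q))) /\
  (critical b p p /\ local_min b p p) /\
  (critical b (1 - 2 * p) p /\ local_min b (1 - 2 * p) p) /\
  (critical b p (1 - 2 * p) /\ local_min b p (1 - 2 * p)) /\
  (critical b (1/3) (1/3) /\ local_min b (1/3) (1/3)) /\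
  saddle b q q /\ saddle b (1 - 2 * q) q /\ saddle b q (1 - 2 * q).
Proof.
  intros Hb Hp Hq Fp Fq.
  assert (Kp : K b p = 0) by (apply K_zero_iff_f0; [lra | lra | exact Fp]).
  assert (Nq : q <> 1/3) by (intros ->; rewrite f0_third in Fq; lra).
  assert (Kq : K b q = 0) by (apply K_zero_iff_f0; [lra | exact Nq | exact Fq]).
  pose proof (K_third b) as K3. pose proof (Knum_third b) as Kn3.
  assert (Hq_third : q < 1/3).
  { destruct (Rlt_or_le q (1/3)) as [H | H]; [exact H |].
    pose proof (K_three_zeros_Knum b p (1/3) q); lra. }
  destruct (K_three_zeros b p q (1/3)) as (c1 & c2 & Hc1 & Hc2 & R1 & R2);
    [lra | lra | assumption .. |].
  assert (Hmin_p : forall a c, orbit p a c -> critical b a c /\ local_min b a c).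
  { intros a c Horb. split; [apply (critical_of_orbit b p); [lra | lra | assumption ..] |].
    apply (local_min_of_Fsym b p 0 c1); [lra | lra | lra | nra | | exact Horb].
    apply Fsym_min_of_K_sign; [lra .. | |]; intros t Ht; rewrite <- Kp;
      apply Rlt_le, (K_decreasing_left b c1 c2); lra. }
  assert (Hmin_3 : critical b (1/3) (1/3) /\ local_min b (1/3) (1/3)).
  { split; [apply (critical_of_orbit b (1/3)); [lra | lra | assumption | apply orbit_diag] |].
    apply (local_min_of_Fsym b (1/3) c2 (1/2)); [lra | lra | lra | lra | | apply orbit_diag].
    apply Fsym_min_of_K_sign; [lra .. | |]; intros t Ht; rewrite <- K3;
      apply Rlt_le, (K_decreasing_right b c1 c2); lra. }
  assert (Hsaddle : forall a c, orbit q a c -> saddle b a c).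
  { intros a c Horb. apply (saddle_of_orbit b q); [lra | lra | assumption .. |].
    pose proof (K_three_zeros_Knum b p q (1/3)).
    assert (0 < d2phi b q) by (apply d2phi_pos; nra). nra. }
  destruct (orbit_all _ p Hmin_p) as (Hp1 & Hp2 & Hp3).
  destruct (orbit_all _ q Hsaddle) as (Hq1 & Hq2 & Hq3).
  split; [| tauto].
  apply (critical_iff_three_orbits b p q); [lra .. | assumption | assumption |].
  intros t Ht Kt.
  pose proof (K_zeros_of_three b p q (1/3) t ltac:(lra) ltac:(lra) Kp Kq K3 Ht Kt). tauto.
Qed.

Lemma regime_at_beta1 p : 0 < p < 1/3 -> f0 p = 2 ->
  (forall x1 x2, in_int_Xi x1 x2 ->
     (critical 2 x1 x2 <->
        (x1, x2) = (p, p) \/ (x1, x2) = (1 - 2 * p, p) \/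
        (x1, x2) = (p, 1 - 2 * p) \/ (x1, x2) = (1/3, 1/3))) /\
  (critical 2 p p /\ local_min 2 p p) /\
  (critical 2 (1 - 2 * p) p /\ local_min 2 (1 - 2 * p) p) /\
  (critical 2 p (1 - 2 * p) /\ local_min 2 p (1 - 2 * p)) /\
  (degenerate_critical 2 (1/3) (1/3) /\ ~ local_min 2 (1/3) (1/3)).
Proof.
  intros Hp Fp.
  assert (Kp : K 2 p = 0) by (apply K_zero_iff_f0; [lra | lra | exact Fp]).
  pose proof (K_third 2) as K3.
  assert (Kn3 : Knum 2 (1/3) = 0) by (rewrite Knum_third; ring).
  destruct (K_rolle 2 p (1/3)) as (c & Hc & Rc); [lra | lra | congruence |].
  assert (Hmin_p : forall a c, orbit p a c -> critical 2 a c /\ local_min 2 a c).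
  { intros a c' Horb. split; [apply (critical_of_orbit 2 p); [lra | lra | assumption ..] |].
    apply (local_min_of_Fsym 2 p 0 c); [lra | lra | lra | lra | | exact Horb].
    apply Fsym_min_of_K_sign; [lra .. | |]; intros t Ht; rewrite <- Kp;
      apply Rlt_le, (K_decreasing_left 2 c (1/3)); lra. }
  assert (H3 : degenerate_critical 2 (1/3) (1/3) /\ ~ local_min 2 (1/3) (1/3)).
  { split.
    - apply (degenerate_of_orbit 2 (1/3));
        [lra | lra | exact K3 | apply orbit_diag | rewrite Kn3; ring].
    - apply (not_local_min_of_K_neg_left 2 (1/3) (1/3 - c)); [lra .. | | apply orbit_diag].
      intros t Ht. rewrite <- K3. apply (K_increasing_mid 2 c (1/3)); lra. }
  destruct (orbit_all _ p Hmin_p) as (Hp1 & Hp2 & Hp3).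
  split; [| tauto].
  apply (critical_iff_two_orbits 2 p); [lra | lra | exact Kp |].
  intros t Ht Kt. apply (K_zeros_of_two 2 p (1/3) t);
    [lra | lra | lra | exact Kp | exact K3 | right; exact Kn3 | exact Ht | exact Kt].
Qed.

Lemma regime_above_beta1 b p q : 2 < b -> 0 < p < q -> q < 1/2 -> f0 p = b -> f0 q = b ->
  (forall x1 x2, in_int_Xi x1 x2 ->
     (critical b x1 x2 <->
        (x1, x2) = (p, p) \/ (x1, x2) = (1 - 2 * p, p) \/
        (x1, x2) = (p, 1 - 2 * p) \/ (x1, x2) = (1/3, 1/3) \/
        (x1, x2) = (q, q) \/ (x1, x2) = (1 - 2 * q, q) \/
        (x1, x2) = (q, 1 - 2 * q))) /\
  (critical b p p /\ global_min b p p) /\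
  (critical b (1 - 2 * p) p /\ global_min b (1 - 2 * p) p) /\
  (critical b p (1 - 2 * p) /\ global_min b p (1 - 2 * p)) /\
  saddle b q q /\ saddle b (1 - 2 * q) q /\ saddle b q (1 - 2 * q) /\
  (critical b (1/3) (1/3) /\ local_max b (1/3) (1/3)).
Proof.
  intros Hb Hpq Hq Fp Fq.
  assert (Np : p <> 1/3) by (intros ->; rewrite f0_third in Fp; lra).
  assert (Nq : q <> 1/3) by (intros ->; rewrite f0_third in Fq; lra).
  assert (Kp : K b p = 0) by (apply K_zero_iff_f0; [lra | exact Np | exact Fp]).
  assert (Kq : K b q = 0) by (apply K_zero_iff_f0; [lra | exact Nq | exact Fq]).
  pose proof (K_third b) as K3. pose proof (Knum_third b) as Kn3.
  assert (Hthird : p < 1/3 < q).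
  { destruct (Rlt_or_le p (1/3)), (Rlt_or_le (1/3) q); [lra | | |];
      [pose proof (K_three_zeros_Knum b p q (1/3))
      | pose proof (K_three_zeros_Knum b (1/3) p q)
      | pose proof (K_three_zeros_Knum b (1/3) p q)]; lra. }
  destruct (K_three_zeros b p (1/3) q) as (c1 & c2 & Hc1 & Hc2 & R1 & R2);
    [lra | lra | assumption .. |].
  assert (Hmin_p : forall a c, orbit p a c -> critical b a c /\ global_min b a c).
  { intros a c Horb. split; [apply (critical_of_orbit b p); [lra | lra | assumption ..] |].
    apply (global_min_of_Fsym b p); [lra | | exact Horb].
    intros t Ht Hbt Ht2. apply (Fsym_min_of_K_sign b 0 p (1/3)); [lra .. | | | nra];
      intros s Hs; [rewrite <- Kp; apply Rlt_le, (K_decreasing_left b c1 c2); lra |].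
    destruct (Rle_or_lt s c1).
    - rewrite <- Kp. apply Rlt_le, (K_decreasing_left b c1 c2); lra.
    - rewrite <- K3. apply Rlt_le, (K_increasing_mid b c1 c2); lra. }
  assert (Hsaddle : forall a c, orbit q a c -> saddle b a c).
  { intros a c Horb. apply (saddle_of_orbit b q); [lra | lra | assumption .. |].
    pose proof (K_three_zeros_Knum b p (1/3) q).
    assert (d2phi b q < 0) by (apply d2phi_neg; nra). nra. }
  assert (H3 : critical b (1/3) (1/3) /\ local_max b (1/3) (1/3)).
  { split; [apply (critical_of_orbit b (1/3)); [lra | lra | assumption | apply orbit_diag] |].
    apply local_max_third, Hb. }
  destruct (orbit_all _ p Hmin_p) as (Hp1 & Hp2 & Hp3).
  destruct (orbit_all _ q Hsaddle) as (Hq1 & Hq2 & Hq3).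
  split; [| tauto].
  apply (critical_iff_three_orbits b p q); [lra .. | assumption | assumption |].
  intros t Ht Kt.
  pose proof (K_zeros_of_three b p (1/3) q t ltac:(lra) ltac:(lra) Kp K3 Kq Ht Kt). tauto.
Qed.

Theorem proposition4p2 :
  forall m0 : R,
  0 < m0 < 1/2 ->
  (forall t, 0 < t < 1/2 -> f0 m0 <= f0 t) ->
  let beta3 := f0 m0 in
  (* (1) *)
  (forall beta, 0 < beta < beta3 ->
     (forall x1 x2, in_int_Xi x1 x2 ->
        (critical beta x1 x2 <-> (x1, x2) = (1/3, 1/3))) /\
     global_min beta (1/3) (1/3))
  /\
  (* (2) beta = beta3, p_beta = q_beta = m0 *)
  (let beta := beta3 in
   let p := m0 in
   (forall x1 x2, in_int_Xi x1 x2 ->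
      (critical beta x1 x2 <->
         (x1, x2) = (p, p) \/ (x1, x2) = (1 - 2 * p, p) \/
         (x1, x2) = (p, 1 - 2 * p) \/ (x1, x2) = (1/3, 1/3))) /\
   (degenerate_critical beta p p /\ ~ local_min beta p p) /\
   (degenerate_critical beta (1 - 2 * p) p /\ ~ local_min beta (1 - 2 * p) p) /\
   (degenerate_critical beta p (1 - 2 * p) /\ ~ local_min beta p (1 - 2 * p)) /\
   global_min beta (1/3) (1/3))
  /\
  (* (3) *)
  (forall beta p q, beta3 < beta < beta1 ->
     0 < p < m0 -> m0 < q < 1/2 -> f0 p = beta -> f0 q = beta ->
     (forall x1 x2, in_int_Xi x1 x2 ->
        (critical beta x1 x2 <->
           (x1, x2) = (p, p) \/ (x1, x2) = (1 - 2 * p, p) \/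
           (x1, x2) = (p, 1 - 2 * p) \/ (x1, x2) = (1/3, 1/3) \/
           (x1, x2) = (q, q) \/ (x1, x2) = (1 - 2 * q, q) \/
           (x1, x2) = (q, 1 - 2 * q))) /\
     (critical beta p p /\ local_min beta p p) /\
     (critical beta (1 - 2 * p) p /\ local_min beta (1 - 2 * p) p) /\
     (critical beta p (1 - 2 * p) /\ local_min beta p (1 - 2 * p)) /\
     (critical beta (1/3) (1/3) /\ local_min beta (1/3) (1/3)) /\
     saddle beta q q /\ saddle beta (1 - 2 * q) q /\ saddle beta q (1 - 2 * q))
  /\
  (* (4) *)
  (forall p, let beta := beta1 in
     0 < p < m0 -> f0 p = beta ->
     (forall x1 x2, in_int_Xi x1 x2 ->
        (critical beta x1 x2 <->
           (x1, x2) = (p, p) \/ (x1, x2) = (1 - 2 * p, p) \/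
           (x1, x2) = (p, 1 - 2 * p) \/ (x1, x2) = (1/3, 1/3))) /\
     (critical beta p p /\ local_min beta p p) /\
     (critical beta (1 - 2 * p) p /\ local_min beta (1 - 2 * p) p) /\
     (critical beta p (1 - 2 * p) /\ local_min beta p (1 - 2 * p)) /\
     (degenerate_critical beta (1/3) (1/3) /\ ~ local_min beta (1/3) (1/3)))
  /\
  (* (5) *)
  (forall beta p q, beta1 < beta ->
     0 < p < m0 -> m0 < q < 1/2 -> f0 p = beta -> f0 q = beta ->
     (forall x1 x2, in_int_Xi x1 x2 ->
        (critical beta x1 x2 <->
           (x1, x2) = (p, p) \/ (x1, x2) = (1 - 2 * p, p) \/
           (x1, x2) = (p, 1 - 2 * p) \/ (x1, x2) = (1/3, 1/3) \/
           (x1, x2) = (q, q) \/ (x1, x2) = (1 - 2 * q, q) \/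
           (x1, x2) = (q, 1 - 2 * q))) /\
     (critical beta p p /\ global_min beta p p) /\
     (critical beta (1 - 2 * p) p /\ global_min beta (1 - 2 * p) p) /\
     (critical beta p (1 - 2 * p) /\ global_min beta p (1 - 2 * p)) /\
     saddle beta q q /\ saddle beta (1 - 2 * q) q /\ saddle beta q (1 - 2 * q) /\
     (critical beta (1/3) (1/3) /\ local_max beta (1/3) (1/3))).
Proof.
  intros m0 Hm0 Hmin beta3.
  pose proof (m0_lt_third m0 Hm0 Hmin). pose proof (beta3_pos m0 Hm0).
  unfold beta1, beta3 in *.
  split; [intros b Hb; apply (regime_below_beta3 m0 Hmin), Hb |].
  split; [apply (regime_at_beta3 m0 Hm0 Hmin) |].
  split; [intros b p q Hb Hp Hq Fp Fq; apply regime_between; (assumption || lra) |].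
  split; [intros p Hp Fp; apply regime_at_beta1; (assumption || lra) |].
  intros b p q Hb Hp Hq Fp Fq; apply regime_above_beta1; (assumption || lra).
Qed.
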